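(* Let $k\in\mathbb{N}$ and let $u=a_1\cdots a_n$ (with letters $a_i$ of a totally ordered finite alphabet $A$) be a word of minimal length within its $\sim_k$-class. Suppose the attributes $(x_i,y_i)$ of $u$ satisfy, for all positions $i<n$: if $(x_i,y_i)=(x_{i+1},y_{i+1})$ and $x_i+y_i=k+1$, then $a_i\le a_{i+1}$. Then $u$ is the shortlex normal form of its $\sim_k$-class.
   Context: $u\sim_k v$ iff $u,v$ have the same scattered subwords of length at most $k$. For words of equal length, $u$ is lexicographically smaller than $v$ if for some word $p$ and letters $a<b$, $pa$ is a prefix of $u$ and $pb$ a prefix of $v$. The shortlex normal form of the $\sim_k$-class of $u$ is the lexicographically smallest word among the shortest words $w$ with $w\sim_k u$. An X-ranker is a nonempty word over $\{\mathsf X_a : a\in A\}$, a Y-ranker a nonempty word over $\{\mathsf Y_a:a\in A\}$, length = word length. For a word $w$: $\mathsf X_a(w)$ is the smallest $a$-position, $r\mathsf X_a(w)$ the smallest $a$-position greater than $r(w)$; $\mathsf Y_a(w)$ the greatest $a$-position, $r\mathsf Y_a(w)$ the greatest $a$-position smaller than $r(w)$ (possibly undefined). The attribute of position $p$ of $u$ is $(x_p,y_p)$, $x_p$ (resp. $y_p$) the minimal length of an X-ranker (resp. Y-ranker) reaching $p$ in $u$. *)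

From mathcomp Require Import all_boot all_order.
Set Implicit Arguments. Unset Strict Implicit. Unset Printing Implicit Defensive.
Import Order.TTheory.

Section Words.
Context {d : Order.disp_t} {A : finOrderType d}.

Definition simk (k : nat) (u v : seq A) : Prop :=
  forall w : seq A, size w <= k -> subseq w u = subseq w v.

Definition lexlt (u v : seq A) : Prop :=
  exists (p : seq A) (a b : A) (s t : seq A),
    (a < b)%O /\ u = p ++ a :: s /\ v = p ++ b :: t.

Definition shortlex_nf (k : nat) (u w : seq A) : Prop :=
  [/\ simk k w u,
      (forall v, simk k v u -> size w <= size v) &
      (forall v, simk k v u -> size v = size w -> v <> w -> lexlt w v)].

(* Positions are 0-based: 0 <= p < size u. *)

(* smallest a-position >= lo *)
Definition findX (u : seq A) (a : A) (lo : nat) : option nat :=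
  let q := find (pred1 a) (drop lo u) in
  if lo + q < size u then Some (lo + q) else None.

(* greatest a-position < hi *)
Definition findY (u : seq A) (a : A) (hi : nat) : option nat :=
  let t := rev (take hi u) in
  let q := find (pred1 a) t in
  if q < size t then Some (size t - q.+1) else None.

(* evaluation of X-ranker X_{a1} ... X_{am} (represented by its letters a1..am),
   the first step looking at positions >= lo *)
Fixpoint xrank (u : seq A) (lo : nat) (s : seq A) : option nat :=
  match s with
  | [::] => None
  | a :: s' =>
      match findX u a lo with
      | None => None
      | Some p => if s' is [::] then Some p else xrank u p.+1 s'
      end
  end.

(* evaluation of Y-ranker Y_{a1} ... Y_{am}, first step looking at positions < hi *)
Fixpoint yrank (u : seq A) (hi : nat) (s : seq A) : option nat :=
  match s with
  | [::] => None
  | a :: s' =>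
      match findY u a hi with
      | None => None
      | Some p => if s' is [::] then Some p else yrank u p s'
      end
  end.

Definition xeval (u : seq A) (s : seq A) : option nat := xrank u 0 s.
Definition yeval (u : seq A) (s : seq A) : option nat := yrank u (size u) s.

Definition is_xattr (u : seq A) (p m : nat) : Prop :=
  (exists s, s <> [::] /\ size s = m /\ xeval u s = Some p) /\
  (forall s, s <> [::] -> xeval u s = Some p -> m <= size s).

Definition is_yattr (u : seq A) (p m : nat) : Prop :=
  (exists s, s <> [::] /\ size s = m /\ yeval u s = Some p) /\
  (forall s, s <> [::] -> yeval u s = Some p -> m <= size s).

End Words.

From mathcomp Require Import all_boot all_order zify.
Set Implicit Arguments. Unset Strict Implicit. Unset Printing Implicit Defensive.
Import Order.TTheory.

(* An X-ranker reaches the position of [c] in [L ++ c :: R] iff it is a subword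
   of [L ++ [:: c]] but not of [L] (dually for Y-rankers), so attributes are the
   lengths of shortest such subwords.  In a word of minimal length every position
   has [x + y <= k + 1]: otherwise deleting its letter would not change the
   [~k]-class.  Let [v = P ++ b :: T] be another word of the same length in the
   class of [u = P ++ a :: S], with [a != b].  An X-witness of [a] in [u] glued to
   a Y-witness of [b] in [v] would separate [u] from [v] if it were short, and
   symmetrically; hence both positions carry the same attribute [(x, y)] with
   [x + y = k + 1].  The Y-witness of [b] then embeds into [S], so [b] occurs in
   [S], and the same gluing arguments show that every position from [a] to the
   first [b] of [S] carries [(x, y)].  The hypothesis makes the letters of this
   block nondecreasing, whence [a < b]. *)

Section Subseq.
Variable T : eqType.
Implicit Types (c e : T) (s t U V W : seq T).

Lemma subseq_catP s U V : subseq s (U ++ V) ->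
  exists s1 s2, [/\ s = s1 ++ s2, subseq s1 U & subseq s2 V].
Proof.
elim: U s => [|c U IH] s /=; first by exists [::], s.
case: s => [|c' s]; first by exists [::], [::]; rewrite sub0seq.
rewrite /=; case: eqP => [eq_c|_] /IH [s1 [s2 [-> sub1 sub2]]].
  by exists (c :: s1), s2; rewrite /= eq_c eqxx.
by exists s1, s2; split=> //; apply: subseq_trans sub1 (subseq_cons _ _).
Qed.

Lemma subseq_cons2 c c' t V : subseq (c :: t) (c' :: V) -> subseq t V.
Proof. by rewrite /=; case: eqP => // _ /cons_subseq. Qed.

Lemma subseq_cons_tail s c V : subseq s (c :: V) -> ~~ subseq s V ->
  exists2 s', s = c :: s' & subseq s' V.
Proof.
case: s => [|c' s] /=; first by rewrite sub0seq.
by case: eqP => [-> sub _|_ sub /negP]; first exists s.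
Qed.

Lemma subseq_rcons_tail s U c : subseq s (rcons U c) -> ~~ subseq s U ->
  exists2 s', s = rcons s' c & subseq s' U.
Proof.
move=> sub notU; have [s' Es sub'] : exists2 s', rev s = c :: s' & subseq s' (rev U).
  by apply: subseq_cons_tail; rewrite -?rev_rcons subseq_rev.
by exists (rev s'); rewrite -?rev_cons -?Es ?revK // -subseq_rev revK.
Qed.

Lemma subseq_rcons_cat s c t U V :
  subseq (rcons s c ++ t) (U ++ V) -> ~~ subseq (rcons s c) U ->
  subseq (c :: t) V.
Proof.
move=> /subseq_catP [s1 [s2 [E sub1 sub2]]] notU.
have [le|lt] := leqP (size s1) (size s).
  have E2 : s2 = drop (size s1) s ++ c :: t.
    rewrite -(drop_size_cat s2 (erefl (size s1))) -E cat_rcons drop_cat.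
    case: ltnP => // ge; have -> : size s1 = size s by lia.
    by rewrite subnn drop_size.
  by apply: subseq_trans sub2; rewrite E2 suffix_subseq.
case/negP: notU; apply: subseq_trans sub1.
apply: (@subseq_trans _ (take (size s).+1 s1)); last exact: take_subseq.
by rewrite -(takel_cat s2 lt) -E takel_cat -(size_rcons s c) ?take_size.
Qed.

Lemma subseq_rcons_catl s c U W :
  subseq (rcons s c) (U ++ W) -> c \notin W -> subseq (rcons s c) U.
Proof.
move=> /subseq_catP [s1 [s2 [E sub1 sub2]]] cW.
case/lastP: s2 E sub2 => [|s2 e]; first by rewrite cats0 => ->.
rewrite -rcons_cat => /rcons_inj [_ <-] /mem_subseq/(_ c).
by rewrite mem_rcons mem_head (negPf cW) => /(_ isT).
Qed.

Lemma subseq_cons_first c t V : subseq (c :: t) V ->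
  exists V1 V2, [/\ V = V1 ++ c :: V2, c \notin V1 & subseq t V2].
Proof.
elim: V => [//|c' V IH] /=; case: eqP => [<- sub|ne /IH [V1 [V2 [-> cV1 sub]]]].
  by exists [::], V.
by exists (c' :: V1), V2; rewrite in_cons negb_or cV1 andbT; split=> //; apply/eqP.
Qed.

Lemma notin_prefix_rcons c e s U V :
  rcons s c = U ++ e :: V -> c \notin s -> c \notin U.
Proof.
case/lastP: V => [|V e']; rewrite ?cats1 -?rcons_cons -?rcons_cat.
  by move=> /rcons_inj [->].
move=> /rcons_inj [-> _].
by rewrite mem_cat negb_or => /andP[].
Qed.

Lemma seq_first_diff u v : size u = size v -> u <> v ->
  exists p x y s t, [/\ x != y, u = p ++ x :: s & v = p ++ y :: t].
Proof.
elim: u v => [|x u IH] [|y v] //= [size_uv].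
case: (eqVneq x y) => [<-|neq_xy] neq_uv; last by exists [::], x, y, u, v.
have [|p [x' [y' [s [t [neq Eu Ev]]]]]] := IH v size_uv.
  by move=> E; apply: neq_uv; rewrite E.
by exists (x :: p), x', y', s, t; rewrite Eu Ev.
Qed.

End Subseq.

Section Rankers.
Context {d : Order.disp_t} {A : finOrderType d}.
Implicit Types (a c : A) (s u L R : seq A).

Lemma findX_drop u a lo :
  findX u a lo = omap (addn lo) (findX (drop lo u) a 0).
Proof. by rewrite /findX drop0 size_drop ltn_subRL; case: ifP. Qed.

Lemma findX0 u a : findX u a 0 = if a \in u then Some (index a u) else None.
Proof. by rewrite /findX drop0 -index_mem. Qed.

Lemma xrank_drop s u lo :
  xrank u lo s = omap (addn lo) (xrank (drop lo u) 0 s).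
Proof.
elim: s u lo => [//|a s IH] u lo; rewrite /= findX_drop.
case: findX => [q|//] /=; case: s IH => [//|a' s] IH.
rewrite IH [in RHS]IH drop_drop; have -> : q.+1 + lo = (lo + q).+1 by lia.
by case: (xrank _ 0 _) => [r|] //=; congr Some; lia.
Qed.

Lemma subseq_cons_take a s u n :
  subseq (a :: s) (take n u) =
  [&& index a u < n, a \in u
    & subseq s (take (n - (index a u).+1) (drop (index a u).+1 u))].
Proof.
elim: u n => [|c u IH] [|n] //=; rewrite in_cons [c == a]eq_sym.
by case: eqP => [->|_] /=; rewrite ?subSS ?subn0 ?drop0 // IH ltnS.
Qed.

Lemma xevalP u s p :
  xeval u s = Some p <->
  [/\ p < size u, subseq s (take p.+1 u) & ~~ subseq s (take p u)].
Proof.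
rewrite /xeval; elim: s u p => [|a s IH] u p /=.
  by rewrite !sub0seq; split=> // -[].
rewrite findX0 !subseq_cons_take.
case: ifP => au; last by rewrite !andbF; split=> // -[].
set q := index a u; have qlt : q < size u by rewrite index_mem.
case: s IH => [|a' s] IH.
  rewrite !sub0seq !andbT -leqNgt; split=> [[<-]|[_ qp pq]]; first by rewrite leqnn.
  by have -> : q = p by apply/eqP; rewrite eqn_leq pq -ltnS qp.
rewrite xrank_drop; split.
  case E: xrank => [r|] //= [<-].
  have [] := (IH _ _).1 E; rewrite size_drop => lt sub notsub.
  have -> : (q.+1 + r).+1 - q.+1 = r.+1 by lia.
  have -> : q.+1 + r - q.+1 = r by lia.
  by rewrite sub (negPf notsub) !andbF !andbT; split=> //; lia.
move=> [ltp /and3P[qp _ sub] notsub].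
have qp' : q < p.
  rewrite ltn_neqAle -ltnS qp andbT; apply: contraTneq sub => ->.
  by rewrite subnn take0.
rewrite qp' /= in notsub.
have -> : p = q.+1 + (p - q.+1) by lia.
have /IH -> // : [/\ p - q.+1 < size (drop q.+1 u),
   subseq (a' :: s) (take (p - q.+1).+1 (drop q.+1 u))
 & ~~ subseq (a' :: s) (take (p - q.+1) (drop q.+1 u))].
split=> //; first by rewrite size_drop; lia.
by rewrite -subSn.
Qed.

Lemma findY_rev u a hi :
  findY u a hi =
  omap (fun q => size (take hi u) - q.+1) (findX (rev (take hi u)) a 0).
Proof. by rewrite /findY /findX drop0 size_rev; case: ifP. Qed.

Lemma yrank_rev s u hi :
  yrank u hi s =
  omap (fun r => size (take hi u) - r.+1) (xrank (rev (take hi u)) 0 s).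
Proof.
elim: s hi => [//|a s IH] hi; rewrite /= findY_rev.
case E: findX => [q|//] /=; case: s IH => [//|a' s] IH.
have qlt : q < size (take hi u).
  by move: E; rewrite findX0; case: ifP => // ain [<-]; rewrite -size_rev index_mem.
rewrite IH (xrank_drop _ (rev (take hi u)) q.+1) drop_rev.
set p := size (take hi u) - q.+1.
have size_p : size (take p u) = p by rewrite size_take_min /p size_take_min; lia.
rewrite size_p -take_min; have -> : minn p hi = p by rewrite /p size_take_min; lia.
by case: (xrank _ 0 _) => [r|] //=; congr Some; rewrite /p; lia.
Qed.

Definition xreach L c s := subseq s (rcons L c) && ~~ subseq s L.
Definition yreach c R s := subseq s (c :: R) && ~~ subseq s R.

Lemma xreach_rev R c s : xreach (rev R) c s = yreach c R (rev s).
Proof.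
by rewrite /xreach -rev_cons -(subseq_rev s (rev _)) -(subseq_rev s (rev R)) !revK.
Qed.

Lemma xeval_reach u L c R s :
  u = L ++ c :: R -> xeval u s = Some (size L) <-> xreach L c s.
Proof.
move=> ->; rewrite xevalP (take_size_cat _ (erefl (size L))) -cat_rcons.
rewrite (take_size_cat _ (size_rcons L c)) size_cat size_rcons addSn ltnS leq_addr.
by rewrite /xreach; split=> [[_ -> ->]|/andP[-> ->]].
Qed.

Lemma yeval_reach u L c R s :
  u = L ++ c :: R -> yeval u s = Some (size L) <-> yreach c R (rev s).
Proof.
move=> Eu; have Erev : rev u = rev R ++ c :: rev L by rewrite Eu rev_cat rev_cons cat_rcons.
rewrite -xreach_rev -(xeval_reach _ Erev) /yeval yrank_rev take_size /xeval.
split; last by move=> ->; rewrite /= Eu size_cat size_rev /=; congr Some; lia.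
case E: xrank => [r|] //= [Er]; congr Some; move: E => /xevalP[lt _ _].
by move: Er lt; rewrite Eu !size_rev size_cat /=; lia.
Qed.

End Rankers.

Lemma ex_minsize (T : finType) (P : pred (seq T)) s :
  P s -> exists2 m, P m & forall t, P t -> size m <= size t.
Proof.
move=> Ps; have ex : exists n, [exists t : n.-tuple T, P t].
  by exists (size s); apply/existsP; exists (in_tuple s).
case: (ex_minnP ex) => n /existsP[m Pm] min; exists m => // t Pt.
by rewrite size_tuple; apply: min; apply/existsP; exists (in_tuple t).
Qed.

Section Attributes.
Context {d : Order.disp_t} {A : finOrderType d}.
Implicit Types (c : A) (s u L R : seq A).

Definition xbound L c n := forall s, xreach L c s -> n <= size s.
Definition ybound c R n := forall s, yreach c R s -> n <= size s.

Lemma xreach_min L c : exists2 s, xreach L c s & xbound L c (size s).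
Proof.
apply: (ex_minsize (s := rcons L c)); rewrite /xreach subseq_refl /=.
by apply/negP => /size_subseq; rewrite size_rcons ltnn.
Qed.

Lemma yreach_min c R : exists2 s, yreach c R s & ybound c R (size s).
Proof.
apply: (ex_minsize (s := c :: R)); rewrite /yreach subseq_refl /=.
by apply/negP => /size_subseq; rewrite ltnn.
Qed.

Lemma xreach_neq0 L c s : xreach L c s -> s <> [::].
Proof. by case: s => // /andP[_]; rewrite sub0seq. Qed.

Lemma yreach_neq0 c R s : yreach c R s -> s <> [::].
Proof. by case: s => // /andP[_]; rewrite sub0seq. Qed.

Lemma is_xattr_of u L c R s : u = L ++ c :: R ->
  xreach L c s -> xbound L c (size s) -> is_xattr u (size L) (size s).
Proof.
move=> Eu xs smin; split; last by move=> t _ /(xeval_reach _ Eu)/smin.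
by exists s; split; [exact: xreach_neq0 xs | split=> //; apply/(xeval_reach _ Eu)].
Qed.

Lemma is_yattr_of u L c R s : u = L ++ c :: R ->
  yreach c R s -> ybound c R (size s) -> is_yattr u (size L) (size s).
Proof.
move=> Eu ys smin; split; last by move=> t _ /(yeval_reach _ Eu)/smin; rewrite size_rev.
exists (rev s); rewrite size_rev; split.
  by move/(congr1 rev); rewrite revK; apply: yreach_neq0 ys.
by split=> //; apply/(yeval_reach _ Eu); rewrite revK.
Qed.

End Attributes.

Section Minimal.
Context {d : Order.disp_t} {A : finOrderType d}.
Implicit Types (c : A) (u v w L R : seq A).

Definition simk_minimal k u := forall v, simk k v u -> size u <= size v.

Lemma simk_sym k u v : simk k u v -> simk k v u.
Proof. by move=> uv w w_k; rewrite uv. Qed.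

Lemma simk_trans k u v w : simk k u v -> simk k v w -> simk k u w.
Proof. by move=> uv vw s s_k; rewrite uv ?vw. Qed.

Lemma simk_minimal_eqsize k u v :
  simk_minimal k u -> simk k v u -> size v = size u -> simk_minimal k v.
Proof. by move=> umin vu size_vu w wv; rewrite size_vu; apply/umin/(simk_trans wv vu). Qed.

(* A subword of [L ++ c :: R] using [c] has length at least [X + Y - 1]. *)
Lemma simk_delete k L c R X Y :
  xbound L c X -> ybound c R Y -> k.+1 < X + Y -> simk k (L ++ R) (L ++ c :: R).
Proof.
move=> xb yb lt w w_k; apply/idP/idP => [|sub].
  by move/subseq_trans; apply; rewrite cat_subseq ?subseq_cons.
move: sub; rewrite -cat_rcons => /subseq_catP [s1 [s2 [Ew sub1 sub2]]].
case s1L: (subseq s1 L); first by rewrite Ew cat_subseq.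
have [s1' Es1 sub1'] := subseq_rcons_tail sub1 (negbT s1L).
case s2R: (subseq (c :: s2) R); first by rewrite Ew Es1 cat_rcons cat_subseq.
have := xb s1; have := yb (c :: s2); rewrite /xreach /yreach /= eqxx sub1 sub2 s1L s2R.
by move: w_k lt; rewrite Ew Es1 size_cat size_rcons /=; lia.
Qed.

Lemma bound_sum_le k L c R X Y :
  simk_minimal k (L ++ c :: R) -> xbound L c X -> ybound c R Y -> X + Y <= k.+1.
Proof.
move=> umin xb yb; rewrite leqNgt; apply/negP => /(simk_delete xb yb)/umin.
by rewrite !size_cat /= addnS ltnn.
Qed.

Lemma attr_of_bounds k u L c R x y :
  simk_minimal k u -> u = L ++ c :: R -> xbound L c x -> ybound c R y -> x + y = k.+1 ->
  is_xattr u (size L) x /\ is_yattr u (size L) y.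
Proof.
move=> umin Eu xb yb sum; subst u.
have [s xs smin] := xreach_min L c; have [t yt tmin] := yreach_min c R.
have le_x := xb s xs; have le_y := yb t yt; have le_sum := bound_sum_le umin smin tmin.
have [<- <-] : size s = x /\ size t = y by lia.
by split; [exact: is_xattr_of xs smin | exact: is_yattr_of yt tmin].
Qed.

End Minimal.

Section FirstDifference.
Context {d : Order.disp_t} {A : finOrderType d} {k : nat} {P S T : seq A} {a b : A}.
Hypothesis vu : simk k (P ++ b :: T) (P ++ a :: S).
Implicit Types (c : A) (Q R : seq A).

Lemma yreach_subseq_suffix ab bb : a != b ->
  xreach P b ab -> yreach b T bb -> size ab + size bb <= k.+1 -> subseq bb S.
Proof.
move=> neq_ab /andP[xb1 xb2] /andP[yb1 yb2] le_k.
have [ab' Eab ab'P] := subseq_rcons_tail xb1 xb2.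
have [bb' Ebb _] := subseq_cons_tail yb1 yb2.
have : subseq (ab' ++ bb) (P ++ a :: S).
  rewrite -vu ?cat_subseq //.
  by move: le_k; rewrite Eab size_rcons size_cat; lia.
rewrite Ebb -cat_rcons => /subseq_rcons_cat; rewrite -Eab => /(_ xb2) /=.
by rewrite eq_sym (negPf neq_ab).
Qed.

Lemma reach_size_gt aa bb :
  xreach P a aa -> yreach b T bb -> subseq bb S -> k < size aa + size bb.
Proof.
move=> /andP[xa1 xa2] /andP[_ yb2] bbS; rewrite ltnNge; apply/negP => le_k.
have [aa' Eaa _] := subseq_rcons_tail xa1 xa2.
have : subseq (aa ++ bb) (P ++ b :: T) by rewrite vu ?size_cat // -cat_rcons cat_subseq.
rewrite Eaa => /subseq_rcons_cat; rewrite -Eaa => /(_ xa2)/subseq_cons2.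
by rewrite (negPf yb2).
Qed.

Lemma xbound_left_of_yreach bb x Q c R :
  yreach b T bb -> x + size bb <= k.+1 ->
  a :: S = Q ++ c :: R -> subseq bb R -> xbound (P ++ Q) c x.
Proof.
move=> /andP[_ yb2] le_k ES bbR al /andP[xl1 xl2]; rewrite leqNgt; apply/negP => lt_x.
have [al' Eal _] := subseq_rcons_tail xl1 xl2.
have : subseq (al ++ bb) (P ++ b :: T).
  rewrite vu; last by rewrite size_cat; lia.
  by rewrite ES catA -cat_rcons cat_subseq.
have notP : ~~ subseq al P.
  by apply: contraNN xl2 => /subseq_trans; apply; apply: prefix_subseq.
rewrite Eal => /subseq_rcons_cat; rewrite -Eal => /(_ notP)/subseq_cons2.
by rewrite (negPf yb2).
Qed.

Lemma xbound_at_yreach bb x Q R :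
  yreach b T bb -> xbound P b x -> x + size bb <= k.+1 ->
  a :: S = Q ++ b :: R -> subseq bb (b :: R) -> xbound (P ++ Q) b x.
Proof.
move=> /andP[_ yb2] xbP le_k ES bbR al /andP[xl1 xl2]; rewrite leqNgt; apply/negP => lt_x.
have [al' Eal al'PQ] := subseq_rcons_tail xl1 xl2.
have notP : ~~ subseq al P.
  by apply: contraNN xl2 => /subseq_trans; apply; apply: prefix_subseq.
case al'P: (subseq al' P).
  have /xbP : xreach P b al by rewrite /xreach notP Eal -!cats1 subseq_cat2r al'P.
  by rewrite leqNgt lt_x.
have : subseq (al' ++ bb) (P ++ b :: T).
  rewrite vu; last by move: lt_x le_k; rewrite Eal size_cat size_rcons; lia.
  by rewrite ES catA cat_subseq.
case/lastP: al' {Eal al'PQ} al'P => [|al'' e]; first by rewrite sub0seq.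
move=> /negbT notP' /subseq_rcons_cat /(_ notP') /subseq_cons2.
by rewrite (negPf yb2).
Qed.

Lemma ybound_before_b aa ab y Q c R :
  xreach P a aa -> xreach P b ab -> size aa + y <= k.+1 -> size ab + y <= k.+1 ->
  S = Q ++ c :: R -> b \notin a :: Q -> ybound c R y.
Proof.
move=> /andP[xa1 xa2] /andP[xb1 xb2] le_a le_b ES bQ be /andP[ye1 ye2].
rewrite leqNgt; apply/negP => lt_y.
have [aa' Eaa _] := subseq_rcons_tail xa1 xa2.
have [ab' Eab _] := subseq_rcons_tail xb1 xb2.
have beT : subseq be T.
  have : subseq (aa ++ be) (P ++ b :: T).
    rewrite vu ?size_cat; last lia.
    by rewrite -cat_rcons cat_subseq // ES (subseq_trans ye1) ?suffix_subseq.
  by rewrite Eaa => /subseq_rcons_cat; rewrite -Eaa => /(_ xa2)/subseq_cons2.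
have : subseq (ab ++ be) ((P ++ a :: Q) ++ c :: R).
  rewrite -catA cat_cons -ES -vu ?size_cat; last lia.
  by rewrite -cat_rcons cat_subseq.
have notPaQ : ~~ subseq ab (P ++ a :: Q).
  by apply: contraNN xb2; rewrite Eab => /subseq_rcons_catl; rewrite -Eab; apply.
rewrite Eab => /subseq_rcons_cat; rewrite -Eab => /(_ notPaQ)/subseq_cons2.
by rewrite (negPf ye2).
Qed.

End FirstDifference.

Section OrderedBlocks.
Context {d : Order.disp_t} {A : finOrderType d}.
Implicit Types (c : A) (u w L Q R : seq A).

Definition attr_ordered k u := forall (p s : seq A) (a b : A) (x1 y1 x2 y2 : nat),
  u = p ++ a :: b :: s ->
  is_xattr u (size p) x1 -> is_yattr u (size p) y1 ->
  is_xattr u (size p).+1 x2 -> is_yattr u (size p).+1 y2 ->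
  (x1, y1) = (x2, y2) -> x1 + y1 = k.+1 -> (a <= b)%O.

Lemma attr_ordered_sorted k u L w R x y :
  attr_ordered k u -> u = L ++ w ++ R -> x + y = k.+1 ->
  (forall Q c Q', w = Q ++ c :: Q' ->
     is_xattr u (size (L ++ Q)) x /\ is_yattr u (size (L ++ Q)) y) ->
  sorted <=%O w.
Proof.
move=> ordered + sum; elim: w L => [//|c w IH] L Eu attr_w.
case: w IH Eu attr_w => [//|c' w] IH Eu attr_w; apply/andP; split.
  have [xc yc] := attr_w [::] c (c' :: w) erefl.
  have [xc' yc'] := attr_w [:: c] c' w erefl.
  rewrite cats0 in xc yc; rewrite size_cat addn1 in xc' yc'.
  exact: (ordered L (w ++ R) c c' x y x y).
apply: (IH (rcons L c)); first by rewrite Eu cat_rcons.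
by move=> Q c'' Q' Ew; rewrite -cats1 -catA; apply: attr_w; rewrite Ew.
Qed.

End OrderedBlocks.

Section MinimalWitnesses.
Context {d : Order.disp_t} {A : finOrderType d} {k : nat} {P S T : seq A} {a b : A}.
Hypotheses (vu : simk k (P ++ b :: T) (P ++ a :: S)) (neq_ab : a != b)
  (umin : simk_minimal k (P ++ a :: S)) (vmin : simk_minimal k (P ++ b :: T)).
Context {aa ba ab bb : seq A}.
Hypotheses (xa : xreach P a aa) (aa_min : xbound P a (size aa))
  (ya : yreach a S ba) (ba_min : ybound a S (size ba))
  (xb : xreach P b ab) (ab_min : xbound P b (size ab))
  (yb : yreach b T bb) (bb_min : ybound b T (size bb)).
Implicit Types (c : A) (Q R : seq A).

Lemma first_diff_sizes :
  [/\ size ab = size aa, size bb = size ba, size aa + size ba = k.+1 & subseq bb S].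
Proof.
have le_u := bound_sum_le umin aa_min ba_min.
have le_v := bound_sum_le vmin ab_min bb_min.
have bbS := yreach_subseq_suffix vu neq_ab xb yb le_v.
have neq_ba : b != a by rewrite eq_sym.
have baT := yreach_subseq_suffix (simk_sym vu) neq_ba xa ya le_u.
have gt_ab := reach_size_gt vu xa yb bbS.
have gt_ba := reach_size_gt (simk_sym vu) xb ya baT.
by split=> //; lia.
Qed.

Section Block.
Context {S1 S2 : seq A}.
Hypotheses (ES : S = S1 ++ b :: S2) (bS1 : b \notin S1) (bbS2 : subseq bb (b :: S2)).

Lemma block_xbound Q c R : a :: rcons S1 b = Q ++ c :: R -> xbound (P ++ Q) c (size aa).
Proof.
have [eq_x eq_y sum _] := first_diff_sizes.
have le_k : size aa + size bb <= k.+1 by rewrite eq_y sum.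
rewrite -rcons_cons; case/lastP: R => [|R e]; rewrite ?cats1 -?rcons_cons -?rcons_cat.
  move=> /rcons_inj [EQ Ec]; rewrite -Ec -EQ.
  by apply: (xbound_at_yreach vu yb _ le_k _ bbS2); rewrite -?eq_x ?ES.
move=> /rcons_inj [EQ _].
apply: (xbound_left_of_yreach vu yb le_k (R := R ++ b :: S2)).
  by rewrite ES -cat_cons EQ -catA.
exact: subseq_trans bbS2 (suffix_subseq _ _).
Qed.

Lemma block_ybound Q c R : a :: rcons S1 b = Q ++ c :: R -> ybound c (R ++ S2) (size ba).
Proof.
have [eq_x eq_y sum _] := first_diff_sizes.
case: Q => [|a' Q] [Ea ER]; first by rewrite -Ea -ER cat_rcons -ES.
apply: (ybound_before_b vu xa xb _ _ (Q := Q)); rewrite ?eq_x ?sum //.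
  by rewrite ES -cat_rcons ER -catA.
by rewrite in_cons negb_or eq_sym neq_ab (notin_prefix_rcons ER).
Qed.

End Block.

Lemma first_diff_lt : attr_ordered k (P ++ a :: S) -> (a < b)%O.
Proof.
move=> ordered; have [_ _ sum bbS] := first_diff_sizes.
have [bb' Ebb _] := subseq_cons_tail (andP yb).1 (andP yb).2.
rewrite Ebb in bbS; have [S1 [S2 [ES bS1 bb'S2]]] := subseq_cons_first bbS.
have bbS2 : subseq bb (b :: S2) by rewrite Ebb /= eqxx.
have Eu : P ++ a :: S = P ++ (a :: rcons S1 b) ++ S2 by rewrite ES cat_cons cat_rcons.
have : sorted <=%O (a :: rcons S1 b).
  apply: (attr_ordered_sorted ordered Eu sum) => Q c R Ew.
  apply: (attr_of_bounds umin _ (block_xbound ES bbS2 Ew) (block_ybound ES bS1 Ew) sum).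
  by rewrite Eu Ew -!catA.
move/(order_path_min le_trans)/allP/(_ b).
by rewrite mem_rcons mem_head lt_neqAle neq_ab => /(_ isT).
Qed.

End MinimalWitnesses.

Theorem theorem14 (d : Order.disp_t) (A : finOrderType d) (k : nat) (u : seq A) :
  (forall v : seq A, simk k v u -> size u <= size v) ->
  (forall (p s : seq A) (a b : A) (x1 y1 x2 y2 : nat),
     u = p ++ a :: b :: s ->
     is_xattr u (size p) x1 -> is_yattr u (size p) y1 ->
     is_xattr u (size p).+1 x2 -> is_yattr u (size p).+1 y2 ->
     (x1, y1) = (x2, y2) -> x1 + y1 = k.+1 ->
     (a <= b)%O) ->
  shortlex_nf k u u.
Proof.
move=> umin ordered; split=> [w _ //|//|v vu size_vu neq_vu].
have [P [a [b [S [T [neq_ab Eu Ev]]]]]] := seq_first_diff (esym size_vu) (nesym neq_vu).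
subst u v; exists P, a, b, S, T; split=> //.
have vmin := simk_minimal_eqsize umin vu size_vu.
have [aa xa aa_min] := xreach_min P a; have [ba ya ba_min] := yreach_min a S.
have [ab xb ab_min] := xreach_min P b; have [bb yb bb_min] := yreach_min b T.
exact: (first_diff_lt vu neq_ab umin vmin xa aa_min ya ba_min xb ab_min yb bb_min ordered).
Qed.
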